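(* A graphic sequence $d$ is forcibly bipartite unicyclic if and only if $d=(2,2,2,2)$.
   Context: A sequence of positive integers $d=(d_1,\ldots,d_n)$ is graphic if some simple graph on $\{1,\ldots,n\}$ has vertex $i$ of degree $d_i$ (a realization). A graph is bipartite unicyclic if it is connected, bipartite, and contains exactly one cycle. A sequence is forcibly bipartite unicyclic if every realization of it is bipartite unicyclic. *)

From mathcomp Require Import all_boot.
Set Implicit Arguments. Unset Strict Implicit. Unset Printing Implicit Defensive.

Definition simple_graph (T : finType) (e : rel T) : Prop :=
  symmetric e /\ irreflexive e.

Definition deg (T : finType) (e : rel T) (v : T) : nat := #|[set w | e v w]|.

Definition realization (d : seq nat) (e : rel 'I_(size d)) : Prop :=
  simple_graph e /\ forall i : 'I_(size d), deg e i = nth 0 d i.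

Definition positive_seq (d : seq nat) : bool := all (fun k => 0 < k) d.

Definition graphic (d : seq nat) : Prop := exists e : rel 'I_(size d), realization e.

Definition connected (T : finType) (e : rel T) : Prop :=
  forall x y : T, connect e x y.

Definition bipartite (T : finType) (e : rel T) : Prop :=
  exists c : T -> bool, forall x y, e x y -> c x != c y.

Definition is_edge (T : finType) (e : rel T) (E : {set T}) : bool :=
  [exists x, exists y, e x y && (E == [set x; y])].

(* A cycle of the graph, viewed as a subgraph given by its edge set F:
   F is a nonempty set of edges of the graph such that every vertex is
   incident to either 0 or exactly 2 edges of F, and the subgraph formed by
   F is connected (any two vertices incident to F are joined by a path
   using only edges of F). *)
Definition is_cycle (T : finType) (e : rel T) (F : {set {set T}}) : Prop :=
  [/\ F != set0,
      (forall E, E \in F -> is_edge e E),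
      (forall v : T, #|[set E in F | v \in E]| = 0 \/ #|[set E in F | v \in E]| = 2)
    & (forall x y : T, (exists2 E, E \in F & x \in E) -> (exists2 E, E \in F & y \in E) ->
         connect (fun a b => [set a; b] \in F) x y)].

Definition has_unique_cycle (T : finType) (e : rel T) : Prop :=
  exists F, is_cycle e F /\ forall F', is_cycle e F' -> F' = F.

Definition bipartite_unicyclic (T : finType) (e : rel T) : Prop :=
  [/\ connected e, bipartite e & has_unique_cycle e].

Definition forcibly_bipartite_unicyclic (d : seq nat) : Prop :=
  forall e : rel 'I_(size d), realization e -> bipartite_unicyclic e.

From mathcomp Require Import all_boot.
Set Implicit Arguments. Unset Strict Implicit. Unset Printing Implicit Defensive.

(* If every realization of d is bipartite unicyclic, then no realization
   contains a path y-a-b-x-z with y <> z: a 2-colouring puts a, x and y, z in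
   equal colour classes, so a, x and y, z are non-adjacent, and the 2-switch
   replacing the edges ay, xz by ax, yz is a realization containing the
   triangle a-b-x.  Walking along the cycle of a realization therefore closes
   up after four steps, and the same argument shows that no vertex outside
   this 4-cycle is adjacent to it; by connectivity the graph is C4 and
   d = (2,2,2,2).  Conversely, a 2-regular graph on four vertices is C4, and
   in a connected 2-regular graph the edge set is the only cycle. *)

Section Graphs.
Variable T : finType.
Implicit Types (e : rel T) (a b p q u v w x y z : T).

Definition nbhd e v : {set T} := [set w | e v w].

Lemma in_nbhd e v w : (w \in nbhd e v) = e v w.
Proof. by rewrite inE. Qed.

Lemma deg_nbhd e v : deg e v = #|nbhd e v|.
Proof. by []. Qed.

Lemma eq_deg e1 e2 : e1 =2 e2 -> deg e1 =1 deg e2.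
Proof. by move=> E v; apply: eq_card => w; rewrite !inE E. Qed.

Lemma edge_neq e u v : irreflexive e -> e u v -> u != v.
Proof. by move=> irr; apply: contraTneq => ->; rewrite irr. Qed.

Lemma nbhd_deg2 e v p q :
  deg e v = 2 -> e v p -> e v q -> p != q -> nbhd e v = [set p; q].
Proof.
move=> dv evp evq pq; apply/eqP; rewrite eq_sym eqEcard cards2 pq -deg_nbhd dv leqnn andbT.
by apply/subsetP => w /set2P[]->; rewrite in_nbhd.
Qed.

Lemma uniq_cover_card (s : seq T) : uniq s -> (forall v, v \in s) <-> #|T| = size s.
Proof.
move=> uS; split => [cover | cardT].
  by rewrite -(card_uniqP uS); apply: eq_card => v; rewrite cover.
have /subset_cardP/(_ (subset_predT (mem s))) sT : #|s| = #|T|.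
  by rewrite cardT (card_uniqP uS).
by move=> v; rewrite sT.
Qed.

Definition two_coloring e (c : T -> bool) := forall u v, e u v -> c u != c v.

Lemma two_coloring_path2 e c u v w : two_coloring e c -> e u v -> e v w -> c u = c w.
Proof. by move=> Hc /Hc + /Hc; case: (c u); case: (c v); case: (c w). Qed.

Lemma two_coloring_nonadj e c u v : two_coloring e c -> c u = c v -> ~~ e u v.
Proof. by move=> Hc cuv; apply/negP => /Hc; rewrite cuv eqxx. Qed.

Lemma triangle_not_bipartite e a b x : e a b -> e b x -> e a x -> ~ bipartite e.
Proof.
move=> eab ebx eax [c Hc].
by move: eax; apply/negP/(two_coloring_nonadj Hc)/(two_coloring_path2 Hc eab ebx).
Qed.

Definition edge1 p q : rel T := fun u v => (u == p) && (v == q) || (u == q) && (v == p).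

Lemma edge1C p q : symmetric (edge1 p q).
Proof. by move=> u v; rewrite /edge1 orbC andbC [X in _ || X]andbC. Qed.

Lemma edge1_swap p q : edge1 p q =2 edge1 q p.
Proof. by move=> u v; rewrite /edge1 orbC. Qed.

Lemma edge1_irr p q u : p != q -> edge1 p q u u = false.
Proof. by move=> pq; apply: contraNF pq => /orP[]/andP[/eqP <- /eqP <-]. Qed.

Definition two_switch e a y x z : rel T :=
  fun u v => e u v && ~~ edge1 a y u v && ~~ edge1 x z u v || edge1 a x u v || edge1 y z u v.

Lemma two_switch_simple e a y x z :
  simple_graph e -> a != x -> y != z -> simple_graph (two_switch e a y x z).
Proof.
case=> sym irr hax hyz; split => [u v | u]; rewrite /two_switch.
  by rewrite sym !(edge1C _ _ u).
by rewrite irr /= !edge1_irr.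
Qed.

Lemma two_switchC e a y x z : two_switch e a y x z =2 two_switch e y a z x.
Proof. by move=> u v; rewrite /two_switch (edge1_swap y a) (edge1_swap z x) orbAC. Qed.

Lemma two_switch_swap e a y x z : two_switch e a y x z =2 two_switch e x z a y.
Proof.
by move=> u v; rewrite /two_switch (edge1_swap x a) (edge1_swap z y) andbAC orbAC.
Qed.

Lemma nbhd_two_switch e a y x z :
  a \notin [:: y; x; z] -> nbhd (two_switch e a y x z) a = x |: (nbhd e a :\ y).
Proof.
rewrite !inE !negb_or => /and3P[hay hax haz]; apply/setP => w.
rewrite !inE /two_switch /edge1 eqxx (negbTE hay) (negbTE hax) (negbTE haz) /=.
by case: (w == x); case: (w == y); case: (e a w).
Qed.

Lemma deg_two_switch_end e a y x z : e a y -> ~~ e a x -> a \notin [:: y; x; z] ->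
  deg (two_switch e a y x z) a = deg e a.
Proof.
move=> eay nax aN; rewrite !deg_nbhd nbhd_two_switch // cardsU1 [RHS](cardsD1 y).
by rewrite !inE eay (negbTE nax) andbF.
Qed.

Lemma deg_two_switch e a y x z : symmetric e -> e a y -> e x z -> ~~ e a x -> ~~ e y z ->
  uniq [:: a; y; x; z] -> deg (two_switch e a y x z) =1 deg e.
Proof.
move=> sym eay exz nax nyz; rewrite /= !inE !negb_or.
move=> /and4P[/and3P[hay hax haz] /andP[hyx hyz] hxz _] v.
have eya : e y a by rewrite sym.
have ezx : e z x by rewrite sym.
have nxa : ~~ e x a by rewrite sym.
have nzy : ~~ e z y by rewrite sym.
case: (v =P a) => [->|/eqP va].
  by apply: deg_two_switch_end eay nax _; rewrite !inE !negb_or hay hax haz.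
case: (v =P y) => [->|/eqP vy].
  rewrite (eq_deg (two_switchC e a y x z)); apply: deg_two_switch_end eya nyz _.
  by rewrite !inE !negb_or (eq_sym y a) hay hyz hyx.
case: (v =P x) => [->|/eqP vx].
  rewrite (eq_deg (two_switch_swap e a y x z)); apply: deg_two_switch_end exz nxa _.
  by rewrite !inE !negb_or (eq_sym x a) (eq_sym x y) hax hyx hxz.
case: (v =P z) => [->|/eqP vz].
  rewrite (eq_deg (two_switch_swap e a y x z)) (eq_deg (two_switchC e x z a y)).
  apply: deg_two_switch_end ezx nzy _.
  by rewrite !inE !negb_or (eq_sym z x) (eq_sym z y) (eq_sym z a) hxz hyz haz.
apply: eq_card => w; rewrite !inE /two_switch /edge1.
by rewrite (negbTE va) (negbTE vy) (negbTE vx) (negbTE vz) /= !andbT !orbF.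
Qed.

End Graphs.

Lemma realization_two_switch d (e : rel 'I_(size d)) a y x z : realization e ->
  e a y -> e x z -> ~~ e a x -> ~~ e y z -> uniq [:: a; y; x; z] ->
  realization (two_switch e a y x z).
Proof.
case=> -[sym irr] Hdeg eay exz nax nyz uniq_ayxz; split => [|v].
  move: (uniq_ayxz); rewrite /= !inE !negb_or => /and4P[/and3P[_ hax _] /andP[_ hyz] _ _].
  exact: two_switch_simple.
by rewrite (deg_two_switch sym eay exz nax nyz uniq_ayxz) Hdeg.
Qed.

Lemma realization_regular d (e : rel 'I_(size d)) k :
  realization e -> (forall v, deg e v = k) -> d = nseq (size d) k.
Proof.
case=> _ Hdeg reg; apply/all_pred1P/(all_nthP 0) => i lt_id.
by have := Hdeg (Ordinal lt_id); rewrite reg /= => <-.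
Qed.

Lemma fbu_path_closes d (e : rel 'I_(size d)) y a b x z :
  forcibly_bipartite_unicyclic d -> realization e ->
  e y a -> e a b -> e b x -> e x z -> a != x -> y != b -> z != b -> y = z.
Proof.
move=> Hf He eya eab ebx exz hax hyb hzb; case: (y =P z) => // /eqP hyz; exfalso.
have [[sym irr] _] := He.
have [_ [c Hc] _] := Hf e He.
have cax : c a = c x := two_coloring_path2 Hc eab ebx.
have cyb : c y = c b := two_coloring_path2 Hc eya eab.
have cbz : c b = c z := two_coloring_path2 Hc ebx exz.
have hxy : x != y by apply: contraTneq (Hc _ _ ebx) => ->; rewrite cyb eqxx.
have haz : a != z by apply: contraTneq (Hc _ _ exz) => <-; rewrite cax eqxx.
have hay : a != y by rewrite eq_sym (edge_neq irr eya).
have hba : b != a by rewrite eq_sym (edge_neq irr eab).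
have hbx := edge_neq irr ebx.
have hxz := edge_neq irr exz.
have eay : e a y by rewrite sym.
have uniq_ayxz : uniq [:: a; y; x; z].
  by rewrite /= !inE !negb_or hay hax haz (eq_sym y x) hxy hyz hxz.
have Hsw := realization_two_switch He eay exz (two_coloring_nonadj Hc cax)
  (two_coloring_nonadj Hc (etrans cyb cbz)) uniq_ayxz.
have [_ bip _] := Hf _ Hsw.
apply: (triangle_not_bipartite (a := a) (b := b) (x := x) _ _ _ bip);
  rewrite /two_switch /edge1.
- by rewrite eab eqxx (negbTE hax) (negbTE haz) (eq_sym b y) (negbTE hyb) (negbTE hay).
- rewrite ebx eqxx (negbTE hba) (negbTE hbx) (eq_sym b z) (negbTE hzb).
  by rewrite (eq_sym x a) (negbTE hax) (negbTE hxz) !andbF.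
- by rewrite !eqxx orbT.
Qed.

Section Cycles.
Variables (T : finType) (e : rel T).
Hypotheses (sym : symmetric e) (irr : irreflexive e).

Lemma is_edge_set2 a b : is_edge e [set a; b] = e a b.
Proof.
apply/idP/idP => [/existsP[p /existsP[q /andP[epq /eqP E]]]|eab]; last first.
  by apply/existsP; exists a; apply/existsP; exists b; rewrite eab eqxx.
have hab : a != b.
  have : (a != b).+1 = (p != q).+1 by rewrite -!cards2 E.
  by rewrite (edge_neq irr epq); case: (a != b).
have aE : a \in [set p; q] by rewrite -E set21.
have bE : b \in [set p; q] by rewrite -E set22.
by move: hab; case/set2P: aE => ->; case/set2P: bE => ->; rewrite ?eqxx // sym.
Qed.

Lemma edge_at E u : is_edge e E -> u \in E -> exists2 v, e u v & E = [set u; v].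
Proof.
case/existsP => p /existsP[q /andP[epq /eqP->]] /set2P[]->; first by exists q.
by exists p; rewrite 1?sym // setUC.
Qed.

Lemma cycle_next_edge F u v : is_cycle e F -> [set v; u] \in F ->
  exists w, [/\ e v w, w != u & [set v; w] \in F].
Proof.
case=> _ Fe Fdeg _ Fvu.
have vuA : [set v; u] \in [set E in F | v \in E] by rewrite inE Fvu set21.
have A2 : #|[set E in F | v \in E]| = 2.
  by case: (Fdeg v) => // A0; move: (card0_eq A0 [set v; u]); rewrite vuA.
have : 0 < #|[set E in F | v \in E] :\ [set v; u]|.
  by move: A2; rewrite (cardsD1 [set v; u]) vuA add1n => -[->].
rewrite card_gt0 => /set0Pn[E]; rewrite !inE => /and3P[EVU EF vE].
have [w evw Evw] := edge_at (Fe E EF) vE.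
exists w; split => //; last by rewrite -Evw.
by apply: contraNneq EVU => wu; rewrite Evw wu.
Qed.

Section TwoRegular.
Hypothesis reg2 : forall v, deg e v = 2.

Definition edges : {set {set T}} := [set E | is_edge e E].

Lemma edges_at v : [set E in edges | v \in E] = [set [set v; w] | w in nbhd e v].
Proof.
apply/setP => E; rewrite !inE; apply/andP/imsetP => [[/edge_at Ev /Ev[w evw ->]]|[w]].
  by exists w; rewrite ?in_nbhd.
by rewrite in_nbhd => evw ->; rewrite is_edge_set2 evw set21.
Qed.

Lemma card_edges_at v : #|[set E in edges | v \in E]| = 2.
Proof.
rewrite edges_at card_in_imset -?deg_nbhd // => w1 w2.
rewrite !in_nbhd => evw1 _ /setP/(_ w1); rewrite set22 => /esym/set2P[w1v|//].
by rewrite w1v irr in evw1.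
Qed.

Lemma cycle_edges (a0 : T) : connected e -> is_cycle e edges.
Proof.
move=> Hcon; split.
- have /card_gt0P[w] : 0 < #|nbhd e a0| by rewrite -deg_nbhd reg2.
  by rewrite in_nbhd => ea0w; apply/set0Pn; exists [set a0; w]; rewrite inE is_edge_set2.
- by move=> E; rewrite inE.
- by move=> v; right; exact: card_edges_at.
- move=> x y _ _; have edgesE : (fun p q => [set p; q] \in edges) =2 e.
    by move=> p q; rewrite inE is_edge_set2.
  by rewrite (eq_connect edgesE).
Qed.

Lemma cycle_saturated F u v w :
  is_cycle e F -> [set u; v] \in F -> e u w -> [set u; w] \in F.
Proof.
move=> cycF Fuv; have [w' [euw' w'v Fuw']] := cycle_next_edge cycF Fuv.
have euv : e u v by rewrite -is_edge_set2; case: cycF => _ Fe _ _; exact: Fe.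
by rewrite -in_nbhd (nbhd_deg2 (reg2 u) euv euw') 1?eq_sym // => /set2P[]->.
Qed.

Lemma two_regular_unique_cycle (a0 : T) : connected e -> has_unique_cycle e.
Proof.
move=> Hcon; exists edges; split => [|F cycF]; first exact: cycle_edges a0 Hcon.
have [F0 Fe _ _] := cycF.
pose V := [pred u | [exists E in F, u \in E]].
have V_edge u : u \in V -> exists2 v, e u v & [set u; v] \in F.
  case/existsP => E /andP[EF uE]; have [v euv Euv] := edge_at (Fe E EF) uE.
  by exists v; rewrite -?Euv.
have Vclosed : closed e V.
  suff VS u w : e u w -> u \in V -> w \in V.
    by move=> u w euw; apply/idP/idP; apply: VS; rewrite // sym.
  move=> euw /V_edge[v _ Fuv]; apply/existsP; exists [set u; w].
  by rewrite (cycle_saturated cycF Fuv euw) set22.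
have [u0 u0V] : exists u0, u0 \in V.
  case/set0Pn: F0 => E EF; case/existsP: (Fe E EF) => p /existsP[q /andP[_ /eqP Epq]].
  by exists p; apply/existsP; exists E; rewrite EF Epq set21.
apply/setP => E; apply/idP/idP => [/Fe|]; first by rewrite inE.
rewrite inE => /existsP[p /existsP[q /andP[epq /eqP ->]]].
have pV : p \in V by rewrite -(closed_connect Vclosed (Hcon u0 p)).
have [v _ Fpv] := V_edge p pV.
exact: cycle_saturated cycF Fpv epq.
Qed.
End TwoRegular.
End Cycles.

Section FourCycles.
Variables (T : finType) (e : rel T).
Hypothesis sym : symmetric e.

Definition four_cycle a b x y := [/\ e a b, e b x, e x y, e y a & uniq [:: a; b; x; y]].

Definition four_cycle_component a b x y :=
  [/\ uniq [:: a; b; x; y], nbhd e a = [set b; y], nbhd e b = [set x; a],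
      nbhd e x = [set y; b] & nbhd e y = [set a; x]].

Lemma four_cycle_rot a b x y : four_cycle a b x y -> four_cycle b x y a.
Proof. by case=> eab ebx exy eya; rewrite -(rot_uniq 1) => u; split. Qed.

Lemma component_closed a b x y :
  four_cycle_component a b x y -> closed e [:: a; b; x; y].
Proof.
case=> _ Na Nb Nx Ny.
suff S u w : e u w -> u \in [:: a; b; x; y] -> w \in [:: a; b; x; y].
  by move=> u w euw; apply/idP/idP; apply: S; rewrite // sym.
move=> euw; rewrite !inE => /or4P[]/eqP u_eq; move: euw; rewrite u_eq -in_nbhd ?Na ?Nb ?Nx ?Ny.
all: by case/set2P => ->; rewrite eqxx ?orbT.
Qed.

Lemma component_deg a b x y v : four_cycle_component a b x y ->
  v \in [:: a; b; x; y] -> deg e v = 2.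
Proof.
case=> + Na Nb Nx Ny; rewrite /= !inE !negb_or.
move=> /and4P[/and3P[_ hax _] /andP[_ hby] _ _] /or4P[]/eqP->.
all: by rewrite deg_nbhd ?Na ?Nb ?Nx ?Ny cards2 ?(eq_sym x) ?(eq_sym y) ?hax ?hby.
Qed.

Section Covering.
Variables a b x y : T.
Hypothesis cover : forall v, v \in [:: a; b; x; y].

Lemma component_connected : four_cycle_component a b x y -> connected e.
Proof.
case=> _ Na Nb _ _.
have eab : e a b by rewrite -in_nbhd Na set21.
have eay : e a y by rewrite -in_nbhd Na set22.
have ebx : e b x by rewrite -in_nbhd Nb set21.
have from_a v : connect e a v.
  move: (cover v); rewrite !inE => /or4P[]/eqP->; first exact: connect0.
  - exact: connect1.
  - exact: connect_trans (connect1 eab) (connect1 ebx).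
  - exact: connect1.
by move=> u v; apply: connect_trans (from_a v); rewrite (sym_connect_sym sym).
Qed.

Lemma component_bipartite : four_cycle_component a b x y -> bipartite e.
Proof.
case=> + Na Nb Nx Ny; rewrite /= !inE !negb_or.
move=> /and4P[/and3P[hab hax hay] /andP[hbx hby] hxy _].
have ca : (a \in [set b; y]) = false by rewrite !inE (negbTE hab) (negbTE hay).
have cx : (x \in [set b; y]) = false by rewrite !inE (eq_sym x b) (negbTE hbx) (negbTE hxy).
have cover4 u : [|| u == a, u == b, u == x | u == y] by move: (cover u); rewrite !inE.
exists (fun v => v \in [set b; y]) => u v.
case/or4P: (cover4 u) => /eqP->; rewrite -in_nbhd ?Na ?Nb ?Nx ?Ny.
all: by case/set2P=> ->; rewrite ?ca ?cx ?set21 ?set22.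
Qed.

End Covering.
End FourCycles.

Lemma regular2_four_cycle_component (T : finType) (e : rel T) a :
  #|T| = 4 -> symmetric e -> irreflexive e -> (forall v, deg e v = 2) ->
  exists b x y, four_cycle_component e a b x y.
Proof.
move=> T4 sym irr reg2.
have /cards2P[b [y [hby Na]]] : #|nbhd e a| == 2 by rewrite -deg_nbhd reg2.
have eab : e a b by rewrite -in_nbhd Na set21.
have eay : e a y by rewrite -in_nbhd Na set22.
have /card_gt0P[x] : 0 < #|[predC [:: a; b; y]]|.
  rewrite -(leq_add2l #|[:: a; b; y]|) cardC T4 addn1.
  exact: leq_ltn_trans (card_size _) _.
rewrite !inE !negb_or => /and3P[hxa hxb hxy].
have uniq_abxy : uniq [:: a; b; x; y].
  rewrite /= !inE !negb_or (edge_neq irr eab) (edge_neq irr eay) hby.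
  by rewrite (eq_sym a x) hxa (eq_sym b x) hxb hxy.
have cover := (uniq_cover_card uniq_abxy).2 T4.
have Nx : nbhd e x = [set y; b].
  apply/eqP; rewrite eqEcard cards2 (eq_sym y b) hby -deg_nbhd reg2 andbT.
  apply/subsetP => w; rewrite in_nbhd => exw; move: (cover w); rewrite !inE.
  case/or4P => /eqP wE; rewrite wE ?eqxx ?orbT // in exw *.
  - by move: (exw); rewrite sym -in_nbhd Na !inE (negbTE hxb) (negbTE hxy).
  - by rewrite irr in exw.
have ebx : e b x by rewrite sym -in_nbhd Nx set22.
have eyx : e y x by rewrite sym -in_nbhd Nx set21.
have eba : e b a by rewrite sym.
have eya : e y a by rewrite sym.
exists b, x, y; split => //; first exact: nbhd_deg2 (reg2 b) ebx eba hxa.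
by apply: nbhd_deg2 (reg2 y) eya eyx _; rewrite eq_sym.
Qed.

Lemma fbu_four_cycle d (e : rel 'I_(size d)) :
  forcibly_bipartite_unicyclic d -> realization e -> exists a b x y, four_cycle e a b x y.
Proof.
move=> Hf He; have [[sym irr] _] := He.
have [_ _ [F [cycF _]]] := Hf e He.
have [F0 Fe _ _] := cycF.
case/set0Pn: F0 => E EF; case/existsP: (Fe E EF) => a /existsP[b /andP[eab /eqP Eab]].
rewrite Eab in EF.
have [y [eay hyb Fay]] := cycle_next_edge sym cycF EF.
have Fba : [set b; a] \in F by rewrite setUC.
have [x [ebx hxa Fbx]] := cycle_next_edge sym cycF Fba.
have Fxb : [set x; b] \in F by rewrite setUC.
have [z [exz hzb _]] := cycle_next_edge sym cycF Fxb.
have eya : e y a by rewrite sym.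
have hax : a != x by rewrite eq_sym.
have yz := fbu_path_closes Hf He eya eab ebx exz hax hyb hzb; subst z.
exists a, b, x, y; split => //.
by rewrite /= !inE !negb_or (edge_neq irr eab) hax (edge_neq irr eay) (edge_neq irr ebx)
  (eq_sym b y) hyb (edge_neq irr exz).
Qed.

Lemma fbu_nbhd d (e : rel 'I_(size d)) a b x y :
  forcibly_bipartite_unicyclic d -> realization e -> four_cycle e a b x y ->
  nbhd e a = [set b; y].
Proof.
move=> Hf He [eab ebx exy eya]; rewrite /= !inE !negb_or.
move=> /and4P[/and3P[_ hax _] /andP[_ hby] _ _].
have [[sym _] _] := He.
apply/setP => w; rewrite in_nbhd !inE; apply/idP/orP => [eaw|[]/eqP->] //; last by rewrite sym.
case: (w =P b) => [->|/eqP hwb]; [by left | right].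
by apply/eqP/(fbu_path_closes Hf He _ eab ebx exy hax hwb); rewrite 1?sym // eq_sym.
Qed.

Lemma fbu_four_cycle_component d (e : rel 'I_(size d)) a b x y :
  forcibly_bipartite_unicyclic d -> realization e -> four_cycle e a b x y ->
  four_cycle_component e a b x y.
Proof.
move=> Hf He C0; have C1 := four_cycle_rot C0.
have C2 := four_cycle_rot C1; have C3 := four_cycle_rot C2.
by split; [case: C0 | exact: fbu_nbhd Hf He C0 | exact: fbu_nbhd Hf He C1
  | exact: fbu_nbhd Hf He C2 | exact: fbu_nbhd Hf He C3].
Qed.

Theorem corollary8p3 (d : seq nat) :
  positive_seq d -> graphic d ->
  (forcibly_bipartite_unicyclic d <-> d = [:: 2; 2; 2; 2]).
Proof.
move=> _ [e0 He0]; split => [Hf | ->].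
  have [[sym _] _] := He0.
  have [a [b [x [y C]]]] := fbu_four_cycle Hf He0.
  have K := fbu_four_cycle_component Hf He0 C.
  have [Hcon _ _] := Hf e0 He0.
  have cover v : v \in [:: a; b; x; y].
    by rewrite -(closed_connect (component_closed sym K) (Hcon a v)) mem_head.
  have [uniq_abxy _ _ _ _] := K.
  have size4 : size d = 4.
    by rewrite -(card_ord (size d)); exact: (uniq_cover_card uniq_abxy).1.
  by rewrite (realization_regular He0 (fun v => component_deg K (cover v))) size4.
move=> e [[sym irr] Hdeg].
have reg2 v : deg e v = 2 by rewrite Hdeg; case: v => [[|[|[|[|]]]]].
have T4 : #|'I_(size [:: 2; 2; 2; 2])| = 4 := card_ord 4.
have [b [x [y K]]] := regular2_four_cycle_component ord0 T4 sym irr reg2.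
have [uniq_abxy _ _ _ _] := K.
have cover := (uniq_cover_card uniq_abxy).2 T4.
have Hcon := component_connected sym cover K.
split => //; first exact: component_bipartite cover K.
exact: two_regular_unique_cycle sym irr reg2 ord0 Hcon.
Qed.
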